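(* Regard $\mathbb{I}=[0,1]$ as a $\mathbb{U}$-poset with action given by evaluation. Then for all $a,b,r\in\mathbb{I}$: $a\le_r b$ iff $a\le b\dotplus r$. Consequently $\rho(a,b)=a\dotminus b$ and $\mathrm{dist}(a,b)=|a-b|$.
   Context: $\mathbb{U}$ is the monoid (under composition) of surjective monotone maps $\mathbb{I}\to\mathbb{I}$. $\dotplus,\dotminus$ denote truncated addition and subtraction on $\mathbb{I}$ ($s\dotplus t=\min(s+t,1)$, $s\dotminus t=\max(s-t,0)$). In a $\mathbb{U}$-poset $A$ (poset with a $\mathbb{U}$-action monotone in both variables), $a\le_r b$ means: for all $u,v\in\mathbb{U}$ with $u(t\dotplus r)\le v(t)$ for all $t\in\mathbb{I}$, $u(a)\le v(b)$. $\rho(a,b):=\bigwedge\{r\in\mathbb{I}\mid a\le_r b\}$, $\mathrm{dist}(a,b):=\rho(a,b)\vee\rho(b,a)$. *)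

From mathcomp Require Import all_boot all_order all_algebra.
From mathcomp Require Import classical_sets reals.
Set Implicit Arguments. Unset Strict Implicit. Unset Printing Implicit Defensive.
Import Order.TTheory GRing.Theory Num.Theory.
Local Open Scope ring_scope.
Local Open Scope classical_set_scope.

Section Defs.
Variable R : realType.

Definition inI (x : R) : Prop := 0 <= x /\ x <= 1.

Definition tplus (s t : R) : R := Num.min (s + t) 1.
Definition tminus (s t : R) : R := Num.max (s - t) 0.

(* u : R -> R represents an element of the monoid U: only its values on I
   matter; it maps I into I, is monotone (order preserving) on I and is
   surjective onto I. *)
Definition isU (u : R -> R) : Prop :=
  (forall x, inI x -> inI (u x)) /\
  (forall x y, inI x -> inI y -> x <= y -> u x <= u y) /\
  (forall y, inI y -> exists2 x, inI x & u x = y).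

Definition le_r (r a b : R) : Prop :=
  forall u v, isU u -> isU v ->
    (forall t, inI t -> u (tplus t r) <= v t) -> u a <= v b.

Definition rho (a b : R) : R := inf [set r | inI r /\ le_r r a b].

Definition dist (a b : R) : R := Num.max (rho a b) (rho b a).
End Defs.

(* For 0 <= p < q <= 1 the clamped linear ramp from p up to q lies in U.  If
   a > b + r with b + r < 1, the ramps u from r to 1 and v from 0 to 1 - r
   satisfy u (t ∔ r) = v t, yet u a = (a - r) / (1 - r) > b / (1 - r) = v b; so
   a <=_r b forces a <= b ∔ r, and the converse is just monotonicity of u.
   Hence {r in I | a <=_r b} is the interval [a ∸ b, 1]. *)
From mathcomp Require Import all_boot all_order all_algebra.
From mathcomp Require Import classical_sets reals real_interval.
From mathcomp Require Import ring lra.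
Set Implicit Arguments. Unset Strict Implicit. Unset Printing Implicit Defensive.
Import Order.TTheory GRing.Theory Num.Theory.
Local Open Scope ring_scope.
Local Open Scope classical_set_scope.

Section UnitInterval.
Variable R : realType.
Implicit Types a b p q r t x y : R.

Definition ramp p q x : R := Num.min (Num.max ((x - p) / (q - p)) 0) 1.

Lemma ramp_in01 p q x : inI (ramp p q x).
Proof.
split; first by rewrite le_min le_max lexx orbT ler01.
by rewrite ge_min lexx orbT.
Qed.

Lemma ramp_le p q : p < q -> {homo ramp p q : x y / x <= y}.
Proof.
move=> pq x y xy; apply: le_min2 => //; apply: le_max2 => //.
by rewrite ler_pM2r ?invr_gt0 ?subr_gt0 // lerD2r.
Qed.

Lemma ramp_id p q x : p < q -> p <= x <= q -> ramp p q x = (x - p) / (q - p).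
Proof.
move=> pq /andP[px xq]; have qp_gt0 : 0 < q - p by rewrite subr_gt0.
rewrite /ramp max_l; last by rewrite divr_ge0 ?subr_ge0 // ltW.
by rewrite min_l // ler_pdivrMr // mul1r lerD2r.
Qed.

Lemma isU_ramp p q : inI p -> inI q -> p < q -> isU (ramp p q).
Proof.
move=> [p0 _] [_ q1] pq; split; first by move=> x _; exact: ramp_in01.
split; first by move=> x y _ _; exact: ramp_le.
move=> y [y0 y1]; have qp_ge0 : 0 <= q - p by rewrite subr_ge0 ltW.
have yd_ge0 : 0 <= y * (q - p) by rewrite mulr_ge0.
have yd_le : y * (q - p) <= q - p by rewrite ler_piMl.
exists (p + y * (q - p)); first by split; lra.
rewrite ramp_id //; last by apply/andP; split; lra.
by field; rewrite subr_eq0 gt_eqF.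
Qed.

Lemma ramp_tplus r t : r < 1 -> ramp r 1 (tplus t r) = ramp 0 (1 - r) t.
Proof.
move=> r1; have c_gt0 : 0 < 1 - r by rewrite subr_gt0.
rewrite /ramp /tplus !subr0; have [tr1 | tr1] := leP (t + r) 1.
  by rewrite addrK.
have t_gt : 1 < t / (1 - r) by rewrite ltr_pdivlMr // mul1r; lra.
rewrite divff ?gt_eqF // (max_l ler01) minxx.
by rewrite (max_l (ltW (lt_trans ltr01 t_gt))) (min_r (ltW t_gt)).
Qed.

Lemma tplus_in01 t r : inI t -> inI r -> inI (tplus t r).
Proof.
move=> [t0 _] [r0 _]; split; last by rewrite ge_min lexx orbT.
by rewrite le_min addr_ge0 ?ler01.
Qed.

Lemma le_r_of_le_tplus a b r : inI a -> inI b -> inI r ->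
  a <= tplus b r -> le_r r a b.
Proof.
move=> Ia Ib Ir ab u v [_ [u_mono _]] _ uv.
exact: le_trans (u_mono _ _ Ia (tplus_in01 Ib Ir) ab) (uv b Ib).
Qed.

Lemma le_tplus_of_le_r a b r : inI a -> inI b -> inI r ->
  le_r r a b -> a <= tplus b r.
Proof.
move=> [a0 a1] [b0 b1] Ir le_ab; have [r0 r1] := Ir.
rewrite leNgt; apply/negP.
rewrite /tplus gt_min (ltNge 1 a) a1 orbF => bra.
have r_lt1 : r < 1 by lra.
have I0 : inI (0 : R) by split; lra.
have I1 : inI (1 : R) by split; lra.
have Ic : inI (1 - r) by split; lra.
have c_gt0 : 0 < 1 - r by lra.
have uv t : inI t -> ramp r 1 (tplus t r) <= ramp 0 (1 - r) t.
  by rewrite ramp_tplus.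
have := le_ab _ _ (isU_ramp Ir I1 r_lt1) (isU_ramp I0 Ic c_gt0) uv.
have ra : r <= a <= 1 by apply/andP; split; lra.
have bc : 0 <= b <= 1 - r by apply/andP; split; lra.
rewrite (ramp_id r_lt1 ra) (ramp_id c_gt0 bc) !subr0 ler_pM2r ?invr_gt0 //.
lra.
Qed.

Lemma le_rE a b r : inI a -> inI b -> inI r -> le_r r a b <-> a <= tplus b r.
Proof.
by move=> Ia Ib Ir; split; [exact: le_tplus_of_le_r | exact: le_r_of_le_tplus].
Qed.

Lemma le_tplusE a b r : a <= 1 -> 0 <= r -> (a <= tplus b r) = (tminus a b <= r).
Proof. by move=> a1 r0; rewrite le_min ge_max a1 r0 !andbT lerBlDl. Qed.

Lemma tminus_in01 a b : inI a -> inI b -> inI (tminus a b).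
Proof.
move=> [_ a1] [b0 _]; split; first by rewrite le_max lexx orbT.
by rewrite ge_max ler01 andbT; lra.
Qed.

Lemma rhoE a b : inI a -> inI b -> rho a b = tminus a b.
Proof.
move=> Ia Ib; have [d0 d1] := tminus_in01 Ia Ib.
rewrite /rho (_ : [set r | _] = `[tminus a b, 1]) ?inf_itvcc //.
apply/seteqP; split => r /=; rewrite in_itv /=.
  move=> [Ir /(le_rE Ia Ib Ir)]; case: Ir Ia => r0 r1 [_ a1].
  by rewrite le_tplusE // r1 andbT.
move=> /andP[dr r1]; have Ir : inI r by split; lra.
split; rewrite // le_rE // le_tplusE //; [by case: Ia | by case: Ir].
Qed.

Lemma max_tminus a b : Num.max (tminus a b) (tminus b a) = `|a - b|.
Proof.
rewrite /tminus maxACA maxxx -[b - a]opprB real_maxrN ?num_real //.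
by rewrite max_l ?normr_ge0.
Qed.

End UnitInterval.

Theorem proposition4p5 (R : realType) :
  (forall a b r : R, inI a -> inI b -> inI r ->
     (le_r r a b <-> a <= tplus b r)) /\
  (forall a b : R, inI a -> inI b ->
     rho a b = tminus a b /\ dist a b = `|a - b|).
Proof.
split; first exact: le_rE.
move=> a b Ia Ib; split; first exact: rhoE.
by rewrite /dist !rhoE // max_tminus.
Qed.
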